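(* Let $q=3^m$ with $m$ a positive integer. Let $b\in\mathbb{F}_q^*$ and $\delta\in\mathbb{F}_{q^2}$. Put $$A=-b,\quad B=b\delta^{q+1}(\delta^q+\delta),\quad C=(\delta^q-\delta)^2-b^{-1},$$ and suppose that $P(x)=b(x^q+x+\delta)^{q+2}-x$ permutes $\mathbb{F}_{q^2}$. (1) If $C=0$, then the compositional inverse of $P(x)$ over $\mathbb{F}_{q^2}$ is $$P^{-1}(x)=b\left(A^{-q/3}\left((x^q+x)-B\right)^{q/3}+\delta\right)^{q+2}-x.$$ (2) If $C$ is not a square in $\mathbb{F}_q$, then the compositional inverse of $P(x)$ over $\mathbb{F}_{q^2}$ is $$P^{-1}(x)=b\left(\delta+\frac{N_{3^m/3}(C)}{1-N_{3^m/3}(C)}\sum_{i=0}^{m-1}A^{-3^i}C^{-\frac{3^{i+1}-1}{2}}\left(x^q+x-B\right)^{3^i}\right)^{q+2}-x.$$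
   Context: For $a\in\mathbb{F}_{3^m}$, $N_{3^m/3}(a)=a^{(3^m-1)/2}$ is the norm to $\mathbb{F}_3$. The compositional inverse of a permutation polynomial $f$ of $\mathbb{F}_{Q}$ is the unique polynomial $f^{-1}$ (modulo $x^Q-x$) with $f(f^{-1}(c))=f^{-1}(f(c))=c$ for all $c\in\mathbb{F}_Q$. *)

From HB Require Import structures.
From mathcomp Require Import all_boot all_order all_algebra all_field.
Set Implicit Arguments. Unset Strict Implicit. Unset Printing Implicit Defensive.
Import GRing.Theory.
Local Open Scope ring_scope.

(* F is a finite field with q^2 elements, q = 3^m.  F_q = {x | x^q = x}. *)

(* Norm from F_{3^m} to F_3: a^((3^m-1)/2) *)
Definition norm3 (F : finFieldType) (m : nat) (a : F) : F :=
  a ^+ ((3 ^ m).-1 %/ 2).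

Definition is_square_Fq (F : finFieldType) (m : nat) (a : F) : Prop :=
  exists y : F, y ^+ (3 ^ m) = y /\ y ^+ 2 = a.

Definition Ppoly (F : finFieldType) (m : nat) (b delta : F) (x : F) : F :=
  b * (x ^+ (3 ^ m) + x + delta) ^+ (3 ^ m + 2) - x.

Definition PcA (F : finFieldType) (b : F) : F := - b.
Definition PcB (F : finFieldType) (m : nat) (b delta : F) : F :=
  b * delta ^+ (3 ^ m + 1) * (delta ^+ (3 ^ m) + delta).
Definition PcC (F : finFieldType) (m : nat) (b delta : F) : F :=
  (delta ^+ (3 ^ m) - delta) ^+ 2 - b^-1.

(* case (1): C = 0;  A^{-q/3} ((x^q+x) - B)^{q/3}, q/3 = 3^(m-1) *)
Definition Pinv1 (F : finFieldType) (m : nat) (b delta : F) (x : F) : F :=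
  b * ((PcA b) ^- (3 ^ m.-1) * ((x ^+ (3 ^ m) + x) - PcB m b delta) ^+ (3 ^ m.-1)
        + delta) ^+ (3 ^ m + 2) - x.

Definition Pinv2 (F : finFieldType) (m : nat) (b delta : F) (x : F) : F :=
  let A := PcA b in
  let B := PcB m b delta in
  let C := PcC m b delta in
  let N := norm3 m C in
  b * (delta + N / (1 - N) *
        \sum_(i < m) (A ^- (3 ^ i) * C ^- ((3 ^ i.+1).-1 %/ 2)
                       * (x ^+ (3 ^ m) + x - B) ^+ (3 ^ i)))
    ^+ (3 ^ m + 2) - x.

From mathcomp Require Import all_boot all_order all_algebra all_field all_solvable.
From mathcomp Require Import ring zify.
Import GRing.Theory.
Local Open Scope ring_scope.

(* Write q = 3^m, T(x) = x^q + x and u = T(c).  Since b and T(c) lie in F_q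
   and Frobenius is additive in characteristic 3, T(P(c)) - B = L(u) with the
   q-linear polynomial L(u) = A (u^3 - C u).  Inverting L on F_q recovers T(c)
   from T(P(c)), and then c = b (T(c) + delta)^(q+2) - P(c).  For C = 0, L is
   A times the Frobenius u |-> u^3.  Otherwise the sum in the statement
   telescopes to N(C)^-1 u^q - u = (N(C)^-1 - 1) u, and N(C) <> 1 because, by
   Euler's criterion, N(C) = 1 would make C a square in F_q. *)

Lemma exp3S_half i : ((3 ^ i.+1).-1 %/ 2 = (3 ^ i).-1 %/ 2 + 3 ^ i)%N.
Proof. by rewrite expnS; have := expn_gt0 3 i; lia. Qed.

Lemma exp3_odd_half m : (3 ^ m = (2 * ((3 ^ m).-1 %/ 2)).+1)%N.
Proof.
have odd3m : odd (3 ^ m) by rewrite oddX orbT.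
by have := odd_double_half (3 ^ m); rewrite odd3m -divn2; lia.
Qed.

Section Char3Frobenius.

Context {R : comNzRingType} (R3 : 3%N \in [pchar R]).

Lemma pchar3_pnat_exp3 i : [pchar R].-nat (3 ^ i)%N.
Proof. by rewrite pnatX (pnatE _ (isT : prime 3)) R3. Qed.

Lemma exp3D i (x y : R) : (x + y) ^+ (3 ^ i) = x ^+ (3 ^ i) + y ^+ (3 ^ i).
Proof. exact/exprDn_pchar/pchar3_pnat_exp3. Qed.

Lemma exp3B i (x y : R) : (x - y) ^+ (3 ^ i) = x ^+ (3 ^ i) - y ^+ (3 ^ i).
Proof. by rewrite exp3D exprNn_pchar // pchar3_pnat_exp3. Qed.

End Char3Frobenius.

Section Char3Field.

Context {R : fieldType} (R3 : 3%N \in [pchar R]).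

Lemma cubic_trace_identity (b u d e : R) : b != 0 ->
  b * ((u + d) * (u + e) ^+ 2) + b * ((u + e) * (u + d) ^+ 2) - u
    - b * (e * d) * (e + d)
  = - b * (u ^+ 3 - ((e - d) ^+ 2 - b^-1) * u).
Proof.
move=> b0; apply/eqP; rewrite -subr_eq0; apply/eqP.
have -> : b * ((u + d) * (u + e) ^+ 2) + b * ((u + e) * (u + d) ^+ 2) - u
    - b * (e * d) * (e + d) - - b * (u ^+ 3 - ((e - d) ^+ 2 - b^-1) * u)
  = 3%:R * (b * (u ^+ 3 + (d + e) * u ^+ 2 + 2%:R * (d * e) * u))
    + (b * b^-1 - 1) * u by ring.
by rewrite pcharf0 // mulfV // subrr !mul0r addr0.
Qed.

Lemma sum_linearized_cubic (A C u : R) m : A != 0 -> C != 0 ->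
  \sum_(i < m) A ^- (3 ^ i) * C ^- ((3 ^ i.+1).-1 %/ 2)
                 * (A * (u ^+ 3 - C * u)) ^+ (3 ^ i)
  = C ^- ((3 ^ m).-1 %/ 2) * u ^+ (3 ^ m) - u.
Proof.
move=> A0 C0; pose f i := C ^- ((3 ^ i).-1 %/ 2) * u ^+ (3 ^ i).
rewrite (eq_bigr (fun i : 'I_m => f i.+1 - f i)) => [|i _].
  rewrite -(big_mkord xpredT (fun i => f i.+1 - f i)) telescope_sumr //.
  by rewrite /f expn0 expr0 invr1 mul1r expr1.
rewrite /f exp3S_half exprD exprMn exp3B // [(C * u) ^+ _]exprMn -exprM -expnS.
have Ci0 : C ^+ ((3 ^ i).-1 %/ 2) != 0 by rewrite expf_neq0.
have Ck0 : C ^+ (3 ^ i) != 0 by rewrite expf_neq0.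
have Ak0 : A ^+ (3 ^ i) != 0 by rewrite expf_neq0.
by field; rewrite Ci0 Ck0 Ak0.
Qed.

End Char3Field.

Lemma Fq_square_of_half_power_eq1 (F : finFieldType) (q h : nat) (C : F) :
  #|F| = (q ^ 2)%N -> q = (2 * h).+1 -> C ^+ h = 1 ->
  exists y : F, y ^+ q = y /\ y ^+ 2 = C.
Proof.
move=> cardF qE Ch; pose n := #|F|.-1.
have h0 : (0 < h)%N by have := card_finNzRing_gt1 F; rewrite cardF qE; nia.
have nE : n = (2 * h * (q + 1))%N by rewrite /n cardF qE; nia.
have unity (x : F) : x != 0 -> x ^+ n = 1.
  move=> x0; apply: (mulIf x0).
  by rewrite mul1r -exprSr /n prednK ?expf_card // cardF qE; lia.
have /hasP [g _ g_prim] : has n.-primitive_root (enum [set~ (0 : F)]).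
  apply: has_prim_root; first by rewrite nE; nia.
  - by apply/allP => x; rewrite mem_enum in_setC1 => x0; rewrite unity_rootE unity.
  - exact: enum_uniq.
  - by rewrite -cardE cardsC1.
have [[i _] /= Cgi] : {i : 'I_n | C = g ^+ i}.
  apply: (prim_rootP g_prim); have -> : n = (h * (2 * (q + 1)))%N by rewrite nE; lia.
  by rewrite exprM Ch expr1n.
have : (n %| i * h)%N by rewrite (prim_order_dvd g_prim) exprM -Cgi Ch.
rewrite nE (mulnC 2 h) -mulnA (mulnC i) dvdn_pmul2l // => /dvdnP [j ij].
have gn : g ^+ n = 1 by apply/eqP; rewrite -(prim_order_dvd g_prim).
exists (g ^+ ((q + 1) * j)); split.
  rewrite -exprM.
  have -> : ((q + 1) * j * q = n * j + (q + 1) * j)%N by rewrite nE qE; nia.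
  by rewrite exprD exprM gn expr1n mul1r.
by rewrite Cgi -exprM ij; congr (_ ^+ _); lia.
Qed.

Lemma norm3_eq1_square {F : finFieldType} {m} {C : F} :
  #|F| = ((3 ^ m) ^ 2)%N -> norm3 m C = 1 -> is_square_Fq m C.
Proof. by move=> cardF; apply: Fq_square_of_half_power_eq1 (exp3_odd_half m). Qed.

Lemma pchar3_of_card {F : finFieldType} {m} :
  #|F| = ((3 ^ m) ^ 2)%N -> 3%N \in [pchar F].
Proof. by move=> cardF; apply: (@card_finPcharP _ _ (m * 2)); rewrite ?expnM. Qed.

Section PpolyTrace.

Variables (F : finFieldType) (m : nat) (b d : F).
Hypotheses (cardF : #|F| = ((3 ^ m) ^ 2)%N) (b0 : b != 0) (bq : b ^+ (3 ^ m) = b).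
Local Notation q := (3 ^ m)%N.
Local Notation F3 := (pchar3_of_card cardF).

Lemma expqK (x : F) : x ^+ q ^+ q = x.
Proof. by rewrite -exprM mulnn -cardF expf_card. Qed.

Lemma trace_Fq (x : F) : (x ^+ q + x) ^+ q = x ^+ q + x.
Proof. by rewrite (exp3D F3) expqK addrC. Qed.

Lemma Ppoly_trace (c : F) :
  Ppoly m b d c ^+ q + Ppoly m b d c - PcB m b d
  = PcA b * ((c ^+ q + c) ^+ 3 - PcC m b d * (c ^+ q + c)).
Proof.
rewrite /Ppoly /PcA /PcB /PcC; set u := c ^+ q + c.
have ud : (u + d) ^+ q = u + d ^+ q by rewrite (exp3D F3) trace_Fq.
have -> : (u + d) ^+ (q + 2) = (u + d ^+ q) * (u + d) ^+ 2 by rewrite exprD ud.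
rewrite (exp3B F3) exprMn bq exprMn -exprM mulnC exprM ud (exp3D F3).
rewrite expqK addn1 (exprSr d) -(cubic_trace_identity F3 _ _ _ _ b0) /u.
by rewrite trace_Fq; ring.
Qed.

Lemma Ppoly_recover (c t : F) :
  t = c ^+ q + c -> b * (t + d) ^+ (q + 2) - Ppoly m b d c = c.
Proof. by move=> ->; rewrite /Ppoly opprB addrC subrK. Qed.

End PpolyTrace.

Theorem theorem3p17 (F : finFieldType) (m : nat) (b delta : F) :
  (0 < m)%N ->
  #|F| = ((3 ^ m) ^ 2)%N ->
  b != 0 -> b ^+ (3 ^ m) = b ->
  bijective (Ppoly m b delta) ->
  (PcC m b delta = 0 ->
     (forall c : F, Pinv1 m b delta (Ppoly m b delta c) = c) /\
     (forall c : F, Ppoly m b delta (Pinv1 m b delta c) = c)) /\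
  (~ is_square_Fq m (PcC m b delta) ->
     (forall c : F, Pinv2 m b delta (Ppoly m b delta c) = c) /\
     (forall c : F, Ppoly m b delta (Pinv2 m b delta c) = c)).
Proof.
move=> m0 cardF b0 bq Pbij.
have inverse G : cancel (Ppoly m b delta) G ->
    (forall c, G (Ppoly m b delta c) = c) /\ (forall c, Ppoly m b delta (G c) = c).
  by move=> PK; split=> //; apply/(bij_can_sym Pbij).
have A0 : PcA b != 0 by rewrite oppr_eq0.
split=> [C0 | nsq]; apply: inverse => c.
  rewrite /Pinv1 Ppoly_trace // C0 mul0r subr0; apply: Ppoly_recover.
  rewrite exprMn mulKf ?expf_neq0 // -exprM -expnS prednK //.
  exact: trace_Fq.
set C := PcC m b delta; set N := norm3 m C.
have C0 : C != 0.
  apply/eqP => C0; apply: nsq; rewrite -/C C0.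
  by exists 0; split; rewrite expr0n ?expn_eq0.
have N0 : N != 0 by rewrite expf_neq0.
have N1 : 1 - N != 0.
  by rewrite subr_eq0 eq_sym; apply/eqP => /(norm3_eq1_square cardF).
rewrite /Pinv2 /= Ppoly_trace // (sum_linearized_cubic (pchar3_of_card cardF)) //.
rewrite trace_Fq // -/C -/N (addrC delta); apply: Ppoly_recover.
by rewrite -[C ^- _]/(N^-1); field; rewrite N0 N1.
Qed.
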